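(* Let $(\mathcal S,\mathcal C,\mathcal R,\mathcal K)$ be a mass-action ACR system with ODE $x'(t)=f(x(t))$ and species $\mathcal S=\{S_1,\dots,S_d,S_{d+1},\dots,S_{d+r}\}$, admitting conservation laws $u^i\cdot x(t)=u^i\cdot x(0)=M_i$ for all $t$, $i=1,\dots,k$, with $u^i\in\mathbb R^{d+r}_{>0}$. Split $\mathcal S$ into $\mathcal S_L=\{S_1,\dots,S_d\}$ and $\mathcal S_H=\{S_{d+1},\dots,S_{d+r}\}$, where no species in $\mathcal S_H$ is an ACR species. Let $\{x^*(M): M=(M_1,\dots,M_k)\in\mathbb R^k_{>0}\}$ be the family of positive steady states, $x^*(M)$ lying in the stoichiometry class with conserved quantities $M$. Suppose for the solution $x(t)$ there is $\widetilde M=(\widetilde M_1,\dots,\widetilde M_k)$ such that $x_{d+i}(0)=x^*_{d+i}(\widetilde M)$ for $i=1,\dots,r$. Then the projected system $(\mathcal S_L,\mathcal C_L,\mathcal R_L,\mathcal K_L)$ with initial condition $q_L(x(0))$ has a positive steady state at $\bar x^*=q_L(x^*(\widetilde M))$. In particular, if $S_i\in\mathcal S_L$ is an ACR species with ACR value $x^*_i$, then $\bar x^*_i=x^*_i$.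
   Context: An ACR system is a deterministic system admitting a positive steady state in which some species (an ACR species) takes the same value (its ACR value) at every positive steady state. For $v\in\mathbb Z^{d+r}$, $q_L(v)=(v_1,\dots,v_d)$ and $q_H(v)=(v_{d+1},\dots,v_{d+r})$. The projected network (freezing the species of $\mathcal S_H$ at their initial values) has species $\mathcal S_L$, complexes $q_L(y)$ for $y\in\mathcal C$, and reactions $q_L(y)\to q_L(y')$ for each $y\to y'\in\mathcal R$ with $q_L(y')\ne q_L(y)$; the rate constant of a projected reaction $\bar y\to\bar y'$ is $\sum\kappa_{y\to y'}\,q_H(x(0))^{q_H(y)}$, summed over all $y\to y'\in\mathcal R$ with $q_L(y)=\bar y$, $q_L(y')=\bar y'$ (with $u^v=\prod u_i^{v_i}$, $0^0=1$). The projected system is the mass-action deterministic system of this network; equivalently its vector field is $\bar f_i(x_1,\dots,x_d)=f_i(x_1,\dots,x_d,x_{d+1}(0),\dots,x_{d+r}(0))$, $i=1,\dots,d$. *)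

From HB Require Import structures.
From mathcomp Require Import all_boot all_order all_algebra.
Set Implicit Arguments. Unset Strict Implicit. Unset Printing Implicit Defensive.
Import Order.TTheory GRing.Theory Num.Theory.
Local Open Scope ring_scope.

Definition complex (n : nat) := {ffun 'I_n -> nat}.
Definition network (n : nat) := seq (complex n * complex n).

Section MassAction.
Variables (R : realFieldType) (n : nat).

(* u^v = prod_i u_i^{v_i}, with 0^0 = 1 *)
Definition monom (x : 'I_n -> R) (y : complex n) : R := \prod_(i < n) x i ^+ y i.

Definition ma_field (N : network n) (kappa : complex n * complex n -> R)
  (x : 'I_n -> R) : 'I_n -> R :=
  fun i => \sum_(p <- N) kappa p * monom x p.1 * ((p.2 i)%:R - (p.1 i)%:R).

Definition positive (x : 'I_n -> R) := forall i, 0 < x i.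

Definition dot (u x : 'I_n -> R) : R := \sum_(i < n) u i * x i.

Definition steady_state (N : network n) kappa (x : 'I_n -> R) :=
  forall i, ma_field N kappa x i = 0.

Definition pos_steady_state (N : network n) kappa (x : 'I_n -> R) :=
  positive x /\ steady_state N kappa x.

Definition ACR_value (N : network n) kappa (i : 'I_n) (c : R) :=
  forall x, pos_steady_state N kappa x -> x i = c.

Definition ACR_species (N : network n) kappa (i : 'I_n) :=
  exists c, ACR_value N kappa i c.

Definition ACR_system (N : network n) kappa :=
  (exists x, pos_steady_state N kappa x) /\ exists i, ACR_species N kappa i.

(* u is a conservation law: u is orthogonal to every reaction vector y' - y,
   hence u . x(t) is constant along every trajectory *)
Definition conservation_law (N : network n) (u : 'I_n -> R) :=
  forall p, p \in N -> \sum_(i < n) u i * ((p.2 i)%:R - (p.1 i)%:R) = 0.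

End MassAction.

Section Projection.
Variables (R : realFieldType) (d r : nat).

Definition qL (y : complex (d + r)) : complex d := [ffun i => y (lshift r i)].
Definition qH (y : complex (d + r)) : complex r := [ffun j => y (rshift d j)].
Definition qLv (x : 'I_(d + r) -> R) : 'I_d -> R := fun i => x (lshift r i).
Definition qHv (x : 'I_(d + r) -> R) : 'I_r -> R := fun j => x (rshift d j).

Definition proj_network (N : network (d + r)) : network d :=
  undup [seq (qL p.1, qL p.2) | p <- N & qL p.2 != qL p.1].

Definition proj_rate (N : network (d + r)) (kappa : complex (d + r) * complex (d + r) -> R)
  (xH0 : 'I_r -> R) (q : complex d * complex d) : R :=
  \sum_(p <- N | (qL p.1 == q.1) && (qL p.2 == q.2)) kappa p * monom xH0 (qH p.1).

End Projection.

From mathcomp Require Import all_boot all_order all_algebra.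
Set Implicit Arguments. Unset Strict Implicit. Unset Printing Implicit Defensive.
Import Order.TTheory GRing.Theory Num.Theory.
Local Open Scope ring_scope.

(* The mass-action monomial x^y factors as x_L^(q_L y) * x_H^(q_H y).  Freezing
   the species of S_H at values x_H, the reactions of N with the same
   L-projection y_L -> y_L' merge into one projected reaction whose rate constant
   is the sum of the kappa_(y -> y') * x_H^(q_H y), so the projected field at x_L
   is the L-part of the original field at (x_L, x_H); the reactions with
   q_L y = q_L y' are dropped but contribute nothing to that L-part.  At
   x = x*(Mt), whose H-part is the frozen initial value, the original field
   vanishes, hence so does the projected one at q_L x*(Mt). *)

Lemma partition_big_seq (V : nmodType) (I J : eqType) (s : seq I) (t : seq J)
    (g : I -> J) (F : I -> V) :
  uniq t ->
  \sum_(j <- t) \sum_(i <- s | g i == j) F i = \sum_(i <- s | g i \in t) F i.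
Proof.
move=> t_uniq; under eq_bigr do rewrite big_mkcond.
rewrite exchange_big /= [RHS]big_mkcond; apply: eq_bigr => i _.
rewrite -big_mkcond /= big_const_seq.
have -> : count (fun j => g i == j) t = count_mem (g i) t.
  by apply: eq_count => j; rewrite eq_sym.
by rewrite count_uniq_mem //; case: (g i \in t); rewrite /= ?addr0.
Qed.

Section Projection.
Variables (R : realFieldType) (d r : nat).

Lemma eq_monom n (x x' : 'I_n -> R) (y : complex n) :
  x =1 x' -> monom x y = monom x' y.
Proof. by move=> eq_x; apply: eq_bigr => i _; rewrite eq_x. Qed.

Lemma monom_split (x : 'I_(d + r) -> R) (y : complex (d + r)) :
  monom x y = monom (qLv x) (qL y) * monom (qHv x) (qH y).
Proof.
by rewrite /monom big_split_ord /=; congr (_ * _); apply: eq_bigr => i _;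
  rewrite ffunE.
Qed.

Variable N : network (d + r).

Lemma mem_proj_network p :
  p \in N -> qL p.2 != qL p.1 -> (qL p.1, qL p.2) \in proj_network N.
Proof.
move=> pN p_nontriv; rewrite mem_undup.
by apply/mapP; exists p; rewrite // mem_filter p_nontriv.
Qed.

Lemma ma_field_proj kappa (x : 'I_(d + r) -> R) (xH : 'I_r -> R) (i : 'I_d) :
  qHv x =1 xH ->
  ma_field (proj_network N) (proj_rate N kappa xH) (qLv x) i =
  ma_field N kappa x (lshift r i).
Proof.
move=> frozen_xH.
pose qLL (p : complex (d + r) * complex (d + r)) := (qL p.1, qL p.2).
pose G p := kappa p * monom (qHv x) (qH p.1) * monom (qLv x) (qL p.1) *
  ((qL p.2 i)%:R - (qL p.1 i)%:R).
have -> : ma_field (proj_network N) (proj_rate N kappa xH) (qLv x) i =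
    \sum_(q <- proj_network N) \sum_(p <- N | qLL p == q) G p.
  apply: eq_bigr => -[y1 y2] _; rewrite /proj_rate !big_distrl /=.
  apply: eq_big => [p | p /andP[/eqP <- /eqP <-]]; first by rewrite xpair_eqE.
  by rewrite /G (eq_monom _ frozen_xH).
have -> : ma_field N kappa x (lshift r i) = \sum_(p <- N) G p.
  apply: eq_bigr => p _.
  by rewrite /G monom_split !ffunE [monom (qLv x) _ * _]mulrC mulrA.
rewrite partition_big_seq ?undup_uniq //.
rewrite [RHS](bigID (fun p => qLL p \in proj_network N)) /=.
rewrite [X in _ = _ + X]big_seq_cond [X in _ = _ + X]big1 ?addr0 //.
move=> p /andP[pN p_notin].
have /eqP p_triv : qL p.2 == qL p.1.
  by apply: contraNT p_notin; exact: mem_proj_network.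
by rewrite /G p_triv subrr mulr0.
Qed.

End Projection.

Theorem mainTheorem5 (R : realFieldType) (d r k : nat)
  (N : network (d + r)) (kappa : complex (d + r) * complex (d + r) -> R)
  (u : 'I_k -> 'I_(d + r) -> R)
  (xstar : ('I_k -> R) -> 'I_(d + r) -> R)
  (x0 : 'I_(d + r) -> R) (Mt : 'I_k -> R) :
  uniq N ->
  (forall p, p \in N -> p.1 != p.2) ->
  (forall p, p \in N -> 0 < kappa p) ->
  ACR_system N kappa ->
  (forall i j, 0 < u i j) ->
  (forall i, conservation_law N (u i)) ->
  (forall j : 'I_r, ~ ACR_species N kappa (rshift d j)) ->
  (forall M : 'I_k -> R, positive M ->
     pos_steady_state N kappa (xstar M) /\ (forall i, dot (u i) (xstar M) = M i)) ->
  (forall i, 0 <= x0 i) ->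
  positive Mt ->
  (forall j : 'I_r, x0 (rshift d j) = xstar Mt (rshift d j)) ->
  pos_steady_state (proj_network N) (proj_rate N kappa (qHv x0)) (qLv (xstar Mt)) /\
  (forall (i : 'I_d) (c : R), ACR_value N kappa (lshift r i) c ->
     qLv (xstar Mt) i = c).
Proof.
(* Only the steady-state property of x*(Mt) and the matching H-coordinates are
   needed. *)
move=> _ _ _ _ _ _ _ xstar_ss _ Mt_pos x0_frozen.
have [[xs_pos xs_steady] _] := xstar_ss Mt Mt_pos.
split; last by move=> i c ACR_i; apply: ACR_i.
split=> i; first exact: xs_pos.
by rewrite ma_field_proj ?xs_steady // => j; rewrite /qHv x0_frozen.
Qed.
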